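(* Let $(E,\rho)$ be a weighted space and $(P(t))_{t\ge0}$ a generalized Feller semigroup on $\mathscr{B}^\rho(E)$, with associated measures $p(t)(x,\cdot)$. Let $\hat p(t)$ be the restriction of $p(t)$ to $E\times\mathcal{B}_0(E)$. Then for every $t\ge0$ and $A\in\mathcal{B}_0(E)$ the map $x\mapsto \hat p(t)(x,A)$ is $\mathcal{B}_0(E)$-measurable, and for all $s,t\ge0$, $x\in E$, $A\in\mathcal{B}_0(E)$, $$\int_E \hat p(s)(y,A)\,\hat p(t)(x,dy)=\hat p(s+t)(x,A),$$ i.e. $(\hat p(t))_{t\ge0}$ is a semigroup of transition kernels on $(E,\mathcal{B}_0(E))$.
   Context: A weighted space is a pair $(E,\rho)$ where $E$ is a completely regular Hausdorff topological space and $\rho:E\to(0,\infty)$ is an admissible weight function, meaning that for every $R\ge 0$ the sublevel set $K_R:=\{x\in E:\rho(x)\le R\}$ is compact. For $f:E\to\mathbb{R}$ put $\|f\|_\rho:=\sup_{x\in E}|f(x)|/\rho(x)$; $\mathscr{B}^\rho(E)$ denotes the closure of $C_b(E)$ with respect to $\|\cdot\|_\rho$ inside $\{f:E\to\mathbb{R}:\|f\|_\rho<\infty\}$. A generalized Feller semigroup on $\mathscr{B}^\rho(E)$ is a family $(P(t))_{t\ge0}$ of bounded linear operators on $\mathscr{B}^\rho(E)$ such that (P1) $P(0)=\mathrm{Id}$; (P2) $P(t+s)=P(s)P(t)$ for all $s,t\ge0$; (P3) $\lim_{t\downarrow0}P(t)f(x)=f(x)$ for all $f\in\mathscr{B}^\rho(E)$,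 $x\in E$; (P4) there exist $\varepsilon>0$, $C<\infty$ with $\|P(t)\|_{L(\mathscr{B}^\rho(E))}\le C$ for all $t\in[0,\varepsilon]$; (P5) each $P(t)$ is a positive operator. For each $t\ge 0$, $x\in E$ there is a unique positive finite Radon measure $p(t)(x,\cdot)$ on the Borel σ-algebra $\mathcal{B}(E)$ with $\int\rho\,dp(t)(x,\cdot)<\infty$ and $P(t)f(x)=\int_E f(y)\,p(t)(x,dy)$ for all $f\in\mathscr{B}^\rho(E)$. The Baire σ-algebra $\mathcal{B}_0(E)$ is the smallest σ-algebra on $E$ making all bounded continuous functions measurable. *)

From HB Require Import structures.
From mathcomp Require Import all_boot all_order all_algebra.
From mathcomp Require Import all_classical all_reals all_analysis.
From mathcomp Require Import measurable_realfun.
Set Implicit Arguments. Unset Strict Implicit. Unset Printing Implicit Defensive.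
Import Order.TTheory GRing.Theory Num.Theory.
Import numFieldNormedType.Exports.
Local Open Scope classical_set_scope.
Local Open Scope ring_scope.

Definition admissible_weight (R : realType) (E : topologicalType) (rho : E -> R) :=
  (forall x, 0 < rho x) /\ (forall r : R, 0 <= r -> compact [set x | rho x <= r]).

Definition Cb (R : realType) (E : topologicalType) (f : E -> R) :=
  continuous f /\ exists M : R, forall x, `|f x| <= M.

(* f has rho-norm at most M, i.e. sup_x |f x| / rho x <= M *)
Definition rho_bounded_by (R : realType) (E : Type) (rho : E -> R) (f : E -> R) (M : R) :=
  forall x, `|f x| <= M * rho x.

(* B^rho(E): the closure of C_b(E) w.r.t. ||.||_rho within functions of finite
   rho-norm. *)
Definition Brho (R : realType) (E : topologicalType) (rho : E -> R) (f : E -> R) :=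
  (exists M, rho_bounded_by rho f M) /\
  forall eps : R, 0 < eps -> exists g, Cb g /\ rho_bounded_by rho (f \- g) eps.

(* Generalized Feller semigroup on B^rho(E); P t is only relevant on B^rho(E)
   and for t >= 0. *)
Definition generalized_Feller (R : realType) (E : topologicalType) (rho : E -> R)
    (P : R -> (E -> R) -> (E -> R)) :=
  (forall t, 0 <= t -> forall f, Brho rho f -> Brho rho (P t f)) /\
  (forall t, 0 <= t -> forall f g (a b : R), Brho rho f -> Brho rho g ->
      P t (fun x => a * f x + b * g x) = (fun x => a * P t f x + b * P t g x)) /\
  (forall t, 0 <= t -> exists C : R, forall f M, Brho rho f ->
      rho_bounded_by rho f M -> rho_bounded_by rho (P t f) (C * M)) /\
  (forall f, Brho rho f -> P 0 f = f) /\
  (forall s t, 0 <= s -> 0 <= t -> forall f, Brho rho f -> P (t + s) f = P s (P t f)) /\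
  (forall f, Brho rho f -> forall x, (fun t => P t f x) @ at_right 0 --> f x) /\
  (exists eps C : R, 0 < eps /\ forall t, 0 <= t <= eps -> forall f M, Brho rho f ->
      rho_bounded_by rho f M -> rho_bounded_by rho (P t f) (C * M)) /\
  (forall t, 0 <= t -> forall f, Brho rho f -> (forall x, 0 <= f x) ->
      forall x, 0 <= P t f x).

Definition BorelSigma (E : ptopologicalType) := g_sigma_algebraType (@open E).

Definition BaireGen (R : realType) (E : ptopologicalType) : set (set E) :=
  [set A | exists f : E -> R, Cb f /\ exists B : set R, measurable B /\ A = f @^-1` B].
Definition BaireSigma (R : realType) (E : ptopologicalType) := g_sigma_algebraType (@BaireGen R E).

Definition finite_Radon (R : realType) (E : ptopologicalType)
    (mu : {measure set (BorelSigma E) -> \bar R}) :=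
  (mu setT < +oo)%E /\
  forall B : set (BorelSigma E), measurable B ->
    mu B = ereal_sup [set mu K | K in [set K : set E | compact K /\ K `<=` B]].

From HB Require Import structures.
From mathcomp Require Import all_boot all_order all_algebra.
From mathcomp Require Import all_classical all_reals all_analysis.
From mathcomp Require Import measurable_realfun.
Import Order.TTheory GRing.Theory Num.Theory.
Import numFieldNormedType.Exports.
Local Open Scope classical_set_scope.
Local Open Scope ring_scope.

Set Implicit Arguments. Unset Strict Implicit. Unset Printing Implicit Defensive.

(* The Baire sigma-algebra is generated by the cozero sets [{h > 0}] of bounded
   continuous [h], which form a pi-system containing [E]; by Dynkin's lemma it
   suffices to prove both claims for such sets.  For them, the bounded continuous
   cutoffs [min(1, n h^+)] increase to the indicator of [{h > 0}], so by monotone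
   convergence [p t x {h > 0}] is the pointwise limit of the Baire-measurable
   functions [P t (min(1, n h^+))], and the semigroup law [P (s + t) = P t o P s]
   passes to the limit.  Bounded continuous functions lie in [B^rho(E)] because
   an admissible weight on a Hausdorff space is bounded away from [0]. *)

Lemma cvg_monotone_convergence_to d (T : measurableType d) (R : realType)
    (mu : {measure set T -> \bar R}) (g : (T -> \bar R)^nat) (l : T -> \bar R) :
  (forall n, measurable_fun [set: T] (g n)) -> (forall n y, (0 <= g n y)%E) ->
  (forall y, nondecreasing_seq (g ^~ y)) -> (forall y, g ^~ y @ \oo --> l y) ->
  (fun n => \int[mu]_y g n y)%E @ \oo --> (\int[mu]_y l y)%E.
Proof.
move=> mg g0 ndg gl.
have := cvg_monotone_convergence (mu := mu) measurableT mg (fun n y _ => g0 n y)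
  (fun y _ => ndg y).
suff <- : (\int[mu]_y limn (g ^~ y) = \int[mu]_y l y)%E by [].
by apply: eq_integral => y _; exact/cvg_lim/gl.
Qed.

Section baire_sets.
Variables (R : realType) (E : ptopologicalType).
Local Notation Borel := (BorelSigma E).
Local Notation Baire := (BaireSigma R E).

Lemma continuous_measurable_Borel (f : E -> R) :
  continuous f -> measurable_fun [set: Borel] f.
Proof.
move=> cf; apply: (@measurability _ _ Borel R _ f (@RGenOInfty.G R)).
  exact: RGenOInfty.measurableE.
move=> _ [_ [a ->] <-]; rewrite setTI; apply: sub_sigma_algebra.
by move/continuousP : cf; apply; exact: itv_open_ends_open.
Qed.

Lemma Cb_preimage_measurable_Baire (f : E -> R) (B : set R) :
  Cb f -> measurable B -> measurable (f @^-1` B : set Baire).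
Proof. by move=> cf mB; apply: sub_sigma_algebra; exists f; split => //; exists B. Qed.

Lemma Cb_measurable_Baire (f : E -> R) : Cb f -> measurable_fun [set: Baire] f.
Proof. by move=> cf _ B mB; rewrite setTI; exact: Cb_preimage_measurable_Baire. Qed.

Lemma Baire_measurable_Borel (A : set E) :
  measurable (A : set Baire) -> measurable (A : set Borel).
Proof.
move=> mA; apply: (smallest_sub _ _ mA); first exact: smallest_sigma_algebra.
move=> _ [f [cf [B [mB ->]]]].
by have := continuous_measurable_Borel cf.1 measurableT mB; rewrite setTI.
Qed.

Lemma measurable_fun_Baire_Borel d (T : measurableType d) (f : E -> T) :
  measurable_fun [set: Baire] f -> measurable_fun [set: Borel] f.
Proof. by move=> mf _ B mB; apply: Baire_measurable_Borel; exact: mf. Qed.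

Lemma Cb_cst (a : R) : Cb (@cst E R a).
Proof. by split; [move=> x; exact: cvg_cst | exists `|a|]. Qed.

Lemma Cb_subr_cst (f : E -> R) (a : R) : Cb f -> Cb (fun x => f x - a).
Proof.
move=> [cf [M hM]]; split.
  by move=> x; apply: cvgB; [exact: cf | exact: cvg_cst].
exists (M + `|a|) => x; rewrite (le_trans (ler_normB _ _))// lerD2r; exact: hM.
Qed.

Lemma Cb_min (f g : E -> R) : Cb f -> Cb g -> Cb (f \min g).
Proof.
move=> [cf [M hM]] [cg [N hN]]; split; first exact: min_fun_continuous.
exists (M + N) => x /=; rewrite /Order.min; case: ifP => _.
  by rewrite (le_trans (hM x))// lerDl (le_trans _ (hN x)).
by rewrite (le_trans (hN x))// lerDr (le_trans _ (hM x)).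
Qed.

Definition cozero : set (set E) :=
  [set A | exists2 h : E -> R, Cb h & A = [set x | 0 < h x]].

Lemma cozero_setT : cozero [set: E].
Proof.
exists (cst 1); first exact: Cb_cst.
by apply/seteqP; split => x //= _; exact: ltr01.
Qed.

Lemma cozero_setI_closed : setI_closed cozero.
Proof.
move=> _ _ [h ch ->] [g cg ->]; exists (h \min g); first exact: Cb_min.
by apply/seteqP; split => x /=; rewrite lt_min => /andP.
Qed.

Lemma cozero_measurable_Baire : cozero `<=` (measurable : set (set Baire)).
Proof.
move=> _ [h ch ->].
have -> : [set x | 0 < h x] = h @^-1` `]0, +oo[.
  by apply/seteqP; split => x /=; rewrite in_itv /= andbT.
exact: Cb_preimage_measurable_Baire.
Qed.

Lemma Baire_cozero : (measurable : set (set Baire)) = <<s cozero >>.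
Proof.
apply/seteqP; split; apply: smallest_sub; try exact: smallest_sigma_algebra.
  move=> _ [f [cf [B [mB ->]]]].
  have mf : measurable_fun [set: g_sigma_algebraType cozero] f.
    apply: (@measurability _ _ (g_sigma_algebraType cozero) R _ f (@RGenOInfty.G R)).
      exact: RGenOInfty.measurableE.
    move=> _ [_ [a ->] <-]; rewrite setTI; apply: sub_sigma_algebra.
    exists (fun x => f x - a); first exact: Cb_subr_cst.
    by apply/seteqP; split => x /=; rewrite in_itv /= andbT subr_gt0.
  by have := mf measurableT _ mB; rewrite setTI.
exact: cozero_measurable_Baire.
Qed.

Definition cozero_approx (h : E -> R) (n : nat) (x : E) : R :=
  Order.min 1 (n%:R * Order.max (h x) 0).

Lemma cozero_approx_ge0 h n x : 0 <= cozero_approx h n x.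
Proof. by rewrite /cozero_approx le_min ler01 mulr_ge0// le_max lexx orbT. Qed.

Lemma cozero_approx_le1 h n x : cozero_approx h n x <= 1.
Proof. by rewrite /cozero_approx ge_min lexx. Qed.

Lemma cozero_approx_nondecreasing h x : nondecreasing_seq (cozero_approx h ^~ x).
Proof.
move=> m n mn; rewrite /cozero_approx le_min ge_min lexx /= ge_min.
by rewrite ler_wpM2r ?orbT ?le_max ?lexx ?orbT// ler_nat.
Qed.

Lemma Cb_cozero_approx h n : Cb h -> Cb (cozero_approx h n).
Proof.
move=> [ch _]; split.
  2: by exists 1 => x; rewrite ger0_norm ?cozero_approx_ge0 ?cozero_approx_le1.
apply: min_fun_continuous; first by move=> y; exact: cvg_cst.
move=> y; apply: cvgM; first exact: cvg_cst.
by apply: (max_fun_continuous ch) => z; exact: cvg_cst.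
Qed.

Lemma cozero_approx_cvg h x :
  (fun n => (cozero_approx h n x)%:E) @ \oo --> (\1_[set y | 0 < h y] x)%:E.
Proof.
apply: cvg_near_cst; rewrite /indic /=.
have [hx|hx] := ltP 0 (h x).
  rewrite mem_set//; exists (Num.truncn (h x)^-1).+1 => // n /= hn.
  congr (_%:E); rewrite /cozero_approx (max_l (ltW hx)); apply/min_l.
  rewrite -(ler_pdivrMr _ _ hx) mul1r (le_trans (ltW (truncnS_gt _)))//.
  by rewrite ler_nat.
rewrite memNset; last by rewrite /= ltNge hx.
by exists 0%N => // n _; rewrite /cozero_approx (max_r hx) mulr0 (min_r ler01).
Qed.

Lemma measurable_EFin_cozero_approx h n : Cb h ->
  measurable_fun [set: Borel] (fun x => (cozero_approx h n x)%:E).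
Proof.
move=> ch; apply/measurable_EFinP; apply: continuous_measurable_Borel.
exact: (Cb_cozero_approx n ch).1.
Qed.

Lemma integral_cozero_approx_cvg (mu : {measure set Borel -> \bar R}) h : Cb h ->
  (fun n => \int[mu]_y (cozero_approx h n y)%:E)%E @ \oo --> mu [set x | 0 < h x].
Proof.
move=> ch; have mA : measurable ([set x | 0 < h x] : set Borel).
  by apply: Baire_measurable_Borel; apply: cozero_measurable_Baire; exists h.
rewrite -[in X in _ --> X](setIT [set x | 0 < h x]) -integral_indic//.
apply: cvg_monotone_convergence_to.
- by move=> n; exact: measurable_EFin_cozero_approx.
- by move=> k z; rewrite lee_fin cozero_approx_ge0.
- by move=> z m n mn; rewrite lee_fin cozero_approx_nondecreasing.
- exact: cozero_approx_cvg.
Qed.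

Lemma Brho_measurable_Baire (rho f : E -> R) :
  Brho rho f -> measurable_fun [set: Baire] f.
Proof.
move=> [_ hf].
have /choice[g hg] n : exists g, Cb g /\ rho_bounded_by rho (f \- g) (harmonic n).
  by apply: hf; exact: harmonic_gt0.
apply: (@measurable_fun_cvg _ Baire R setT g) => [n|x _].
  exact: Cb_measurable_Baire (hg n).1.
have rho_cvg : (fun n => harmonic n * rho x) @ \oo --> (0 : R).
  by rewrite -(mul0r (rho x)); apply: cvgM; [exact: cvg_harmonic | exact: cvg_cst].
apply/cvgrPdist_le => e e0; near=> n.
apply: le_trans (proj2 (hg n) x) (le_trans (ler_norm _) _).
by near: n; exact: (cvgr0_norm_le _ rho_cvg _ e0).
Unshelve. all: by end_near. Qed.

(* The sublevel sets [{rho <= 1/(n+1)}] are closed, nested and contained in the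
   compact [{rho <= 1}]; if all were nonempty they would share a point [z], and
   then [rho z <= 0]. *)
Lemma admissible_weight_lower_bound (rho : E -> R) :
  hausdorff_space E -> admissible_weight rho ->
  exists2 c : R, 0 < c & forall x, c <= rho x.
Proof.
move=> hE [rho_gt0 rho_compact]; apply: contrapT => /forall2NP no_bound.
pose K n := [set x | rho x <= n.+1%:R^-1].
have K_nonempty n : exists x, K n x.
  have [c_le0|/existsNP[x /negP]] := no_bound n.+1%:R^-1.
    by exfalso; apply: c_le0; rewrite invr_gt0.
  by rewrite -ltNge => /ltW; exists x.
have K_sub m n : (m <= n)%N -> K n `<=` K m.
  by move=> mn x /le_trans; apply; rewrite lef_pV2 ?posrE// ler_nat.
pose F := filter_from [set: nat] K.
have F_proper : ProperFilter F.
  apply: filter_from_proper => [|n _]; last exact: K_nonempty.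
  apply: filter_from_filter; first by exists 0%N.
  move=> i j _ _; exists (maxn i j) => // x Kx.
  by split; apply: K_sub Kx; rewrite ?leq_maxl ?leq_maxr.
have F_K1 : F [set x | rho x <= 1] by exists 0%N => // x; rewrite /K /= invr1.
have [z [_ z_cluster]] := rho_compact 1 ler01 _ F_proper F_K1.
have Kz n : K n z.
  have : closure (K n) z by rewrite clusterE in z_cluster; apply: z_cluster; exists n.
  by apply: (compact_closed hE (rho_compact _ _)); rewrite invr_ge0.
have := Kz (Num.truncn (rho z)^-1); apply/negP; rewrite -ltNge.
rewrite -[X in _ < X](invrK (rho z)) ltf_pV2 ?posrE ?invr_gt0 ?rho_gt0//.
exact: truncnS_gt.
Qed.

Lemma Cb_Brho (rho f : E -> R) :
  hausdorff_space E -> admissible_weight rho -> Cb f -> Brho rho f.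
Proof.
move=> hE adm [cf [M hM]]; have [c c0 hc] := admissible_weight_lower_bound hE adm.
split.
  exists (`|M| / c) => x; rewrite (le_trans (hM x)) ?(le_trans (ler_norm M))//.
  by rewrite -mulrA ler_peMr// ler_pdivlMl// mulr1.
move=> e e0; exists f; split; first by split => //; exists M.
by move=> x; rewrite /= subrr normr0 mulr_ge0 ?(ltW e0) ?(le_trans (ltW c0)).
Qed.

End baire_sets.

Lemma measureC_add d (T : measurableType d) (R : realType)
    (mu : {measure set T -> \bar R}) (S : set T) :
  measurable S -> (mu (~` S) + mu S = mu [set: T])%E.
Proof.
move=> mS; rewrite -measureU ?setvU ?setICl//; exact: measurableC.
Qed.

Section transition_kernels.
Variables (R : realType) (E : ptopologicalType) (rho : E -> R).
Variables (P : R -> (E -> R) -> (E -> R)).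
Variable p : R -> E -> {measure set (BorelSigma E) -> \bar R}.
Local Notation Borel := (BorelSigma E).
Local Notation Baire := (BaireSigma R E).

Hypothesis Cb_sub_Brho : forall f, Cb f -> Brho rho f.
Hypothesis P_Brho : forall t, 0 <= t -> forall f, Brho rho f -> Brho rho (P t f).
Hypothesis P_semigroup : forall s t, 0 <= s -> 0 <= t -> forall f, Brho rho f ->
  P (t + s) f = P s (P t f).
Hypothesis p_finite : forall t, 0 <= t -> forall x, (p t x [set: E] < +oo)%E.
Hypothesis P_integral : forall t, 0 <= t -> forall x f, Brho rho f ->
  ((P t f x)%:E = \int[p t x]_y (f y)%:E)%E.

Lemma Brho_cozero_approx h n : Cb h -> Brho rho (cozero_approx h n).
Proof. by move=> ch; apply/Cb_sub_Brho/Cb_cozero_approx. Qed.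

Lemma measurable_P_cozero_approx t h n : 0 <= t -> Cb h ->
  measurable_fun [set: Baire] (P t (cozero_approx h n)).
Proof.
move=> t0 ch; apply: (@Brho_measurable_Baire R E rho).
exact/P_Brho/Brho_cozero_approx.
Qed.

Lemma P_cozero_approx_cvg t x h : 0 <= t -> Cb h ->
  (fun n => (P t (cozero_approx h n) x)%:E) @ \oo --> p t x [set y | 0 < h y].
Proof.
move=> t0 ch; have -> : (fun n => (P t (cozero_approx h n) x)%:E) =
    (fun n => \int[p t x]_y (cozero_approx h n y)%:E)%E.
  by apply/funext => n; exact/P_integral/Brho_cozero_approx.
exact: integral_cozero_approx_cvg.
Qed.

Lemma measurable_kernel_cozero t A : 0 <= t -> cozero R A ->
  measurable_fun [set: Baire] (fun x => p t x A).
Proof.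
move=> t0 [h ch ->].
apply: (@emeasurable_fun_cvg _ Baire R setT
  (fun n x => (P t (cozero_approx h n) x)%:E)) => [n|x _].
  by apply/measurable_EFinP; exact: measurable_P_cozero_approx.
exact: P_cozero_approx_cvg.
Qed.

Lemma measurable_kernel t A : 0 <= t -> measurable (A : set Baire) ->
  measurable_fun [set: Baire] (fun x => p t x A).
Proof.
move=> t0; rewrite Baire_cozero; move: A.
apply: (dynkin_induction (Baire_cozero R E) (@cozero_setI_closed R E)).
- exact: measurable_kernel_cozero (cozero_setT R E).
- by move=> A; exact: measurable_kernel_cozero.
- move=> S mS mpS.
  have -> : (fun x => p t x (~` S)) = (fun x => p t x [set: E] - p t x S)%E.
    apply/funext => x; rewrite -setTD measureD ?setTI ?p_finite//.
    exact: (Baire_measurable_Borel mS).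
  by apply: emeasurable_funB => //; exact: measurable_kernel_cozero (cozero_setT R E).
- move=> F mF tF mpF.
  have mFB k : measurable (F k : set Borel) by exact: (Baire_measurable_Borel (mF k)).
  have -> : (fun x => p t x (\bigcup_k F k)) = (fun x => \sum_(k <oo) p t x (F k))%E.
    by apply/funext => x; rewrite measure_semi_bigcup//; exact: bigcup_measurable.
  by apply: ge0_emeasurable_sum => // k x _ _.
Qed.

Lemma chapman_kolmogorov_cozero s t x A : 0 <= s -> 0 <= t -> cozero R A ->
  (\int[p t x]_y p s y A = p (s + t) x A)%E.
Proof.
move=> s0 t0 [h ch ->].
pose g n y := (P s (cozero_approx h n) y)%:E.
have gE n y : g n y = (\int[p s y]_z (cozero_approx h n z)%:E)%E.
  exact/P_integral/Brho_cozero_approx.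
have lim_kernel : (fun n => \int[p t x]_y g n y)%E @ \oo -->
    (\int[p t x]_y p s y [set z | (0 < h z)%R])%E.
  apply: cvg_monotone_convergence_to.
  - move=> n; apply/measurable_EFinP.
    exact: measurable_fun_Baire_Borel (measurable_P_cozero_approx n s0 ch).
  - move=> n y; rewrite gE; apply: integral_ge0 => z _.
    by rewrite lee_fin cozero_approx_ge0.
  - move=> y m n mn; rewrite !gE; apply: ge0_le_integral => //.
    + by move=> z _; rewrite lee_fin cozero_approx_ge0.
    + exact: measurable_EFin_cozero_approx.
    + exact: measurable_EFin_cozero_approx.
    + by move=> z _; rewrite lee_fin cozero_approx_nondecreasing.
  - by move=> y; exact: P_cozero_approx_cvg.
have lim_semigroup : (fun n => \int[p t x]_y g n y)%E @ \oo -->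
    p (s + t) x [set z | 0 < h z].
  have -> : (fun n => \int[p t x]_y g n y)%E =
      (fun n => (P (s + t) (cozero_approx h n) x)%:E).
    apply/funext => n; have Bn := Brho_cozero_approx n ch.
    have PBn : Brho rho (P s (cozero_approx h n)) by exact: P_Brho.
    by rewrite P_semigroup// P_integral.
  exact: P_cozero_approx_cvg (addr_ge0 s0 t0) ch.
exact: cvg_unique _ lim_kernel lim_semigroup.
Qed.

Lemma chapman_kolmogorov s t x A : 0 <= s -> 0 <= t -> measurable (A : set Baire) ->
  (\int[p t x]_y p s y A = p (s + t) x A)%E.
Proof.
move=> s0 t0; rewrite Baire_cozero; move: A.
have measurable_ps B : measurable (B : set Baire) ->
    measurable_fun [set: Borel] (fun y => p s y B).
  by move=> mB; exact: measurable_fun_Baire_Borel (measurable_kernel s0 mB).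
apply: (dynkin_induction (Baire_cozero R E) (@cozero_setI_closed R E)).
- exact: chapman_kolmogorov_cozero (cozero_setT R E).
- by move=> A; exact: chapman_kolmogorov_cozero.
- move=> S mS IH; have mSB := Baire_measurable_Borel mS.
  have fin : p (s + t) x S \is a fin_num.
    rewrite ge0_fin_numE//; apply: le_lt_trans (p_finite (addr_ge0 s0 t0) x).
    by apply: le_measure; rewrite ?inE.
  have split_integral : (\int[p t x]_y p s y (~` S) + \int[p t x]_y p s y S =
      p (s + t) x (~` S) + p (s + t) x S)%E.
    rewrite -ge0_integralD//;
      [|exact: measurable_ps (measurableC mS) | exact: measurable_ps mS].
    under eq_integral => y _ do rewrite measureC_add//.
    by rewrite measureC_add// (chapman_kolmogorov_cozero _ s0 t0 (cozero_setT R E)).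
  move: split_integral; rewrite IH => /(congr1 (fun e => e - p (s + t) x S)%E).
  by rewrite !addeK.
- move=> F mF tF IH; have mFB k : measurable (F k : set Borel).
    exact: Baire_measurable_Borel (mF k).
  have mUF : measurable (\bigcup_k F k : set Borel) by exact: bigcup_measurable.
  under eq_integral => y _ do rewrite measure_semi_bigcup//.
  rewrite measure_semi_bigcup// integral_nneseries//.
    by apply: eq_eseriesr => k _; exact: IH.
  by move=> k; exact: measurable_ps (mF k).
Qed.

End transition_kernels.

Theorem mainTheorem4 (R : realType) (E : ptopologicalType) (rho : E -> R)
    (P : R -> (E -> R) -> (E -> R))
    (p : R -> E -> {measure set (BorelSigma E) -> \bar R}) :
  hausdorff_space E -> completely_regular_space E -> admissible_weight rho ->
  generalized_Feller rho P ->
  (forall t, 0 <= t -> forall x, finite_Radon (p t x) /\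
     (\int[p t x]_y (rho y)%:E < +oo)%E /\
     forall f, Brho rho f -> ((P t f x)%:E = \int[p t x]_y (f y)%:E)%E) ->
  (forall t, 0 <= t -> forall A : set (BaireSigma R E), measurable A ->
     measurable_fun [set: BaireSigma R E] (fun x : BaireSigma R E => p t x A)) /\
  (forall s t, 0 <= s -> 0 <= t -> forall (x : E) (A : set (BaireSigma R E)), measurable A ->
     (\int[p t x]_y (p s y A) = p (s + t)%R x A)%E).
Proof.
move=> hE _ adm [P_Brho [_ [_ [_ [P_semigroup _]]]]] hp.
have Cb_sub_Brho f : Cb f -> Brho rho f := Cb_Brho hE adm.
have p_finite t (t0 : 0 <= t) x := (hp t t0 x).1.1.
have P_integral t (t0 : 0 <= t) x := (hp t t0 x).2.2.
split => [t t0 A|s t s0 t0 x A].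
- exact: (measurable_kernel Cb_sub_Brho P_Brho p_finite P_integral).
- exact: (chapman_kolmogorov Cb_sub_Brho P_Brho P_semigroup p_finite P_integral).
Qed.
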